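(* Let $G$ be a dense $K_4^3\cup e$-free $3$-graph on $[n]$ with $\lambda(G)>\frac{\sqrt3}{18}$, and let $\vec x$ be an optimum weight vector for $G$. Then for any two distinct vertices $a,b\in[n]$, $x_a+x_b\le\frac{3-\sqrt3}{3}$.
   Context: $K_4^3\cup e$ is the $3$-graph on $\{1,\dots,7\}$ with edges $\{123,124,134,234,567\}$. For a $3$-graph $G$ on $[n]$, $\lambda(G,\vec x)=\sum_{e\in E(G)}\prod_{i\in e}x_i$ and $\lambda(G)=\max\{\lambda(G,\vec x):\sum_ix_i=1,x_i\ge0\}$; an optimum weight vector is a maximizer. $G$ is dense if $\lambda(G')<\lambda(G)$ for every proper subgraph $G'$. *)

From mathcomp Require Import all_boot all_order all_algebra.
From mathcomp Require Import all_classical all_reals.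
Set Implicit Arguments. Unset Strict Implicit. Unset Printing Implicit Defensive.
Import Order.TTheory GRing.Theory Num.Theory.
Local Open Scope ring_scope.
Local Open Scope classical_set_scope.

Definition is_3graph (n : nat) (G : {set {set 'I_n}}) : Prop :=
  forall e, e \in G -> #|e| = 3%N.

Definition lagr_poly (R : realType) (n : nat) (G : {set {set 'I_n}})
  (x : 'I_n -> R) : R :=
  \sum_(e in G) \prod_(i in e) x i.

Definition in_simplex (R : realType) (n : nat) (x : 'I_n -> R) : Prop :=
  (forall i, 0 <= x i) /\ \sum_(i < n) x i = 1.

Definition lagrangian_on (R : realType) (n : nat) (V : {set 'I_n})
  (G : {set {set 'I_n}}) : R :=
  sup [set lagr_poly G x | x in
        [set x : 'I_n -> R | in_simplex x /\ (forall i, i \notin V -> x i = 0)]].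

Local Close Scope classical_set_scope.

Definition lagrangian (R : realType) (n : nat) (G : {set {set 'I_n}}) : R :=
  lagrangian_on R (finset.setT : {set 'I_n}) G.

Definition optimum_weight (R : realType) (n : nat) (G : {set {set 'I_n}})
  (x : 'I_n -> R) : Prop :=
  in_simplex x /\ lagr_poly G x = lagrangian R G.

Definition dense (R : realType) (n : nat) (G : {set {set 'I_n}}) : Prop :=
  forall (V' : {set 'I_n}) (E' : {set {set 'I_n}}),
    E' \subset G ->
    (forall e, e \in E' -> e \subset V') ->
    (V' != (finset.setT : {set 'I_n})) || (E' != G) ->
    lagrangian_on R V' E' < lagrangian R G.

(* K_4^3 \cup e on vertices {0..6} (= {1..7} shifted) *)
Definition v7 (k : nat) : 'I_7 := inord k.
Definition K43e : {set {set 'I_7}} :=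
  [set [set v7 0; v7 1; v7 2]; [set v7 0; v7 1; v7 3]; [set v7 0; v7 2; v7 3];
       [set v7 1; v7 2; v7 3]; [set v7 4; v7 5; v7 6]].

(* G contains no (not necessarily induced) copy of K_4^3 \cup e *)
Definition K43e_free (n : nat) (G : {set {set 'I_n}}) : Prop :=
  ~ exists f : 'I_7 -> 'I_n, injective f /\ forall e, e \in K43e -> f @: e \in G.

From mathcomp Require Import all_boot all_order all_algebra.
From mathcomp Require Import all_classical all_reals.
From mathcomp Require Import ring lra.
Set Implicit Arguments.
Unset Strict Implicit.
Unset Printing Implicit Defensive.

Import Order.TTheory GRing.Theory Num.Theory.
Local Open Scope ring_scope.

(* At an optimum x, every vertex a of positive weight satisfies the
   Karush-Kuhn-Tucker condition d lambda(G, x) / d x_a >= 3 lambda(G): shift a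
   little weight off a and renormalise, using that lambda(G, .) is homogeneous
   of degree 3.  As a pair of other vertices lies in at most one edge through
   a, twice this partial derivative is at most
   (1 - x_a)^2 - sum_(c <> a) x_c^2 <= (1 - x_a)^2 - x_b^2.
   Adding the inequalities for a and b gives
   x_a + x_b <= 1 - 6 lambda(G) < 1 - sqrt 3 / 3. *)

Lemma card3_set3 (T : finType) (e : {set T}) a c d :
  #|e| = 3%N -> a \in e -> c \in e -> d \in e ->
  a != c -> a != d -> c != d -> e = [set a; c; d].
Proof.
move=> e3 ae ce de ac ad cd; apply/eqP; rewrite eq_sym eqEcard e3.
apply/andP; split.
  by apply/fintype.subsetP => i; rewrite !inE => /orP[/orP[]|] /eqP->.
have -> : [set a; c; d] = a |: [set c; d] by apply/setP => i; rewrite !inE orbA.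
by rewrite cardsU1 cards2 !inE negb_or ac ad cd.
Qed.

Lemma prod_card2 (R : comPzRingType) (T : finType) (S : {set T}) (f : T -> R) :
  #|S| = 2%N -> \prod_(i in S) f i *+ 2 = \sum_(c in S) \sum_(d in S :\ c) f c * f d.
Proof.
move=> /eqP/cards2P[c [d [cd ->]]].
have dc : d != c by rewrite eq_sym.
have Sc : [set c; d] :\ c = [set d] by rewrite setU1K // inE.
have Sd : [set c; d] :\ d = [set c] by rewrite finset.setUC setU1K // inE.
by rewrite !big_setU1 ?inE //= !big_set1 Sc Sd !big_set1 mulr2n [f d * _]mulrC.
Qed.

Section Lagrangian.
Variables (R : realType) (n : nat) (G : {set {set 'I_n}}).

Lemma simplex_le1 (x : 'I_n -> R) i : in_simplex x -> x i <= 1.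
Proof. by move=> [x0 <-]; rewrite (bigD1 i) //= lerDl sumr_ge0. Qed.

Lemma lagr_poly_ge0 (x : 'I_n -> R) : (forall i, 0 <= x i) -> 0 <= lagr_poly G x.
Proof. by move=> x0; apply: sumr_ge0 => e _; apply: prodr_ge0. Qed.

Lemma lagr_poly_le_card (x : 'I_n -> R) : in_simplex x -> lagr_poly G x <= #|G|%:R.
Proof.
move=> xS; rewrite -sumr_const; apply: ler_sum => e _.
by apply: prodr_ile1 => i _; rewrite simplex_le1 // andbT; case: xS.
Qed.

Lemma lagr_poly_le_lagrangian (x : 'I_n -> R) :
  in_simplex x -> lagr_poly G x <= lagrangian R G.
Proof.
move=> xS; apply: ub_le_sup; last by exists x => //; split => // i; rewrite inE.
by exists #|G|%:R => _ [y [yS _] <-]; apply: lagr_poly_le_card.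
Qed.

Definition lagr_partial (x : 'I_n -> R) (a : 'I_n) : R :=
  \sum_(e in G | a \in e) \prod_(i in e :\ a) x i.

Lemma lagr_partial_ge0 (x : 'I_n -> R) a :
  (forall i, 0 <= x i) -> 0 <= lagr_partial x a.
Proof. by move=> x0; apply: sumr_ge0 => e _; apply: prodr_ge0. Qed.

Lemma lagr_poly_update (x y : 'I_n -> R) a : (forall i, i != a -> y i = x i) ->
  lagr_poly G y = lagr_poly G x + (y a - x a) * lagr_partial x a.
Proof.
move=> yx; rewrite /lagr_poly /lagr_partial mulr_sumr.
rewrite (bigID (fun e : {set _} => a \in e)) /=.
rewrite [X in _ = X + _](bigID (fun e : {set _} => a \in e)) /=.
rewrite addrAC -big_split /=; congr (_ + _); apply: eq_bigr => e /andP[_ ae].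
  have yxe : \prod_(i in e :\ a) y i = \prod_(i in e :\ a) x i.
    by apply: eq_bigr => i; rewrite in_setD1 => /andP[ia _]; apply: yx.
  by rewrite !(big_setD1 a ae) /= yxe -mulrDl addrC subrK.
by apply: eq_bigr => i ie; apply: yx; apply: contraNneq ae => <-.
Qed.

Hypothesis G3 : is_3graph G.

Lemma lagr_polyZ (x : 'I_n -> R) c :
  lagr_poly G (fun i => c * x i) = c ^+ 3 * lagr_poly G x.
Proof. by rewrite /lagr_poly mulr_sumr; apply: eq_bigr => e eG; rewrite prodrMl G3. Qed.

(* By homogeneity the renormalised vector has Lagrangian polynomial
   (lambda - eps * d_a lambda) / (1 - eps)^3. *)
Lemma optimum_shrink (x : 'I_n -> R) a eps : optimum_weight G x ->
  0 < eps <= x a -> eps < 1 ->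
  lagrangian R G - eps * lagr_partial x a <= lagrangian R G * (1 - eps) ^+ 3.
Proof.
move=> [[x0 x1] xL] /andP[eps0 epsa] eps1.
set z := fun i => if i == a then x a - eps else x i.
have zx i : i != a -> z i = x i by rewrite /z => /negbTE ->.
have z0 i : 0 <= z i by rewrite /z; case: eqP => _; rewrite ?subr_ge0.
have z1 : \sum_i z i = 1 - eps.
  rewrite -x1 (bigD1 a) //= [X in _ = X - _](bigD1 a) //= (eq_bigr _ (fun i => zx i)).
  by rewrite /z eqxx addrAC.
have epsV0 : 0 < (1 - eps)^-1 by rewrite invr_gt0 subr_gt0.
have yS : in_simplex (fun i => (1 - eps)^-1 * z i).
  split=> [i|]; first by rewrite mulr_ge0 // ltW.
  by rewrite -mulr_sumr z1 mulVf // subr_eq0 eq_sym lt_eqF.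
have := lagr_poly_le_lagrangian yS.
rewrite lagr_polyZ (lagr_poly_update zx) xL /z eqxx addrAC subrr add0r mulNr.
by rewrite exprVn ler_pdivrMl ?exprn_gt0 ?subr_gt0 // [_ ^+ 3 * _]mulrC.
Qed.

Lemma optimum_lagr_partial (x : 'I_n -> R) a : optimum_weight G x -> 0 < x a ->
  3 * lagrangian R G <= lagr_partial x a.
Proof.
move=> xopt xa0; have [[x0 _] xL] := xopt.
set L := lagrangian R G in xL *; set D := lagr_partial x a.
have L0 : 0 <= L by rewrite -xL lagr_poly_ge0.
have D0 : 0 <= D by apply: lagr_partial_ge0.
have xa1 : x a <= 1 by apply: simplex_le1; case: xopt.
rewrite leNgt; apply/negP => DL.
have Lpos : 0 < L by lra.
(* Makes 3 L eps <= (3 L - D) / 2, contradicting 3 L - D <= 3 L eps shown below. *)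
pose eps := x a * (3 * L - D) / (6 * L).
have epsE : eps * (6 * L) = x a * (3 * L - D).
  by rewrite mulfVK // gt_eqF // mulr_gt0.
have eps0 : 0 < eps by rewrite divr_gt0 ?mulr_gt0 // subr_gt0.
have epsa : eps <= x a / 2 by nra.
have epsx : 0 < eps <= x a by rewrite eps0; lra.
have eps1 : eps < 1 by lra.
have := optimum_shrink xopt epsx eps1; rewrite -/L -/D => shrink.
have : eps * (3 * L - D - 3 * L * eps) <= 0.
  have Leps3 : 0 <= L * eps ^+ 3 by rewrite mulr_ge0 ?exprn_ge0 ?ltW.
  have cube : L * (1 - eps) ^+ 3 = L - 3 * L * eps + 3 * L * eps ^+ 2 - L * eps ^+ 3.
    by ring.
  rewrite expr2 in cube; nra.
rewrite pmulr_rle0 //; nra.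
Qed.

Lemma lagr_partial_le_pairs (x : 'I_n -> R) a : (forall i, 0 <= x i) ->
  lagr_partial x a *+ 2 <= \sum_(c | c != a) \sum_(d | (d != a) && (d != c)) x c * x d.
Proof.
move=> x0; rewrite /lagr_partial -sumrMnl.
under eq_bigr => e /andP[eG ae].
  rewrite prod_card2; last by move: (G3 eG); rewrite (cardsD1 a) ae => -[].
over.
rewrite /= (exchange_big_dep (fun c => c != a)) /=; last first.
  by move=> e c _; rewrite in_setD1 => /andP[].
apply: ler_sum => c ca.
rewrite (exchange_big_dep (fun d => (d != a) && (d != c))) /=; last first.
  by move=> e d _; rewrite !in_setD1 => /and3P[-> -> _].
apply: ler_sum => d /andP[da dc].
(* The only edge through a, c and d is {a, c, d}. *)
set E := [set a; c; d].
have edgeE e : (e \in G) && (a \in e) && (c \in e :\ a) && (d \in e :\ a :\ c) =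
    (e == E) && (E \in G).
  apply/idP/idP => [|/andP[/eqP-> EG]].
    rewrite !in_setD1 => /andP[/andP[/andP[eG ae] /andP[_ ce]] /and3P[_ _ de]].
    have eE : e = E by apply: card3_set3; rewrite // ?(G3 eG) // eq_sym.
    by rewrite -eE eqxx eG.
  by rewrite EG !inE !eqxx ca dc da !orbT.
rewrite (eq_bigl _ _ edgeE); case: (E \in G).
  by under eq_bigl => e do rewrite andbT; rewrite big_pred1_eq.
by rewrite big_pred0 ?mulr_ge0 // => e; rewrite andbF.
Qed.

Lemma lagr_partial_le (x : 'I_n -> R) a b : in_simplex x -> a != b ->
  2 * lagr_partial x a <= (1 - x a) ^+ 2 - x b ^+ 2.
Proof.
move=> [x0 x1] ab; rewrite mulr_natl; apply: le_trans (lagr_partial_le_pairs a x0) _.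
have off_a : \sum_(d | d != a) x d = 1 - x a.
  by rewrite -x1 [in RHS](bigD1 a) //= addrC addrK.
have inner c : c != a ->
    \sum_(d | (d != a) && (d != c)) x c * x d = x c * (1 - x a) - x c ^+ 2.
  by move=> ca; rewrite -mulr_sumr -off_a [in RHS](bigD1 c) //= mulrDr -expr2 addrC addKr.
have sq_b : x b ^+ 2 <= \sum_(c | c != a) x c ^+ 2.
  by rewrite (bigD1 b) 1?eq_sym //= lerDl sumr_ge0 // => i _; rewrite sqr_ge0.
by rewrite (eq_bigr _ inner) sumrB -mulr_suml off_a -expr2 lerB.
Qed.

Lemma optimum_pair_le (x : 'I_n -> R) a b : optimum_weight G x -> a != b ->
  0 < x a -> 6 * lagrangian R G <= (1 - x a) ^+ 2 - x b ^+ 2.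
Proof.
move=> xopt ab xa0.
have := optimum_lagr_partial xopt xa0; have := lagr_partial_le xopt.1 ab; lra.
Qed.

Lemma optimum_pair_sum_le (x : 'I_n -> R) a b : optimum_weight G x -> a != b ->
  0 < x a + x b -> x a + x b <= 1 - 6 * lagrangian R G.
Proof.
move=> xopt; have [[x0 _] _] := xopt.
wlog xa0 : a b / 0 < x a => [sym ab s0|ab _].
  have [xa0|xa0] := ltrP 0 (x a); first exact: sym.
  rewrite addrC sym 1?eq_sym 1?addrC //; have := x0 a; lra.
have xa1 : x a <= 1 by apply: simplex_le1; case: xopt.
have [xb0|xb0] := ltrP 0 (x b).
  have ba : b != a by rewrite eq_sym.
  have := optimum_pair_le xopt ab xa0; have := optimum_pair_le xopt ba xb0.
  have : (1 - x a) ^+ 2 - x b ^+ 2 + ((1 - x b) ^+ 2 - x a ^+ 2) = 2 - 2 * (x a + x b).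
    by ring.
  lra.
have xb_0 : x b = 0 by apply/le_anti; rewrite xb0 x0.
have := optimum_pair_le xopt ab xa0; rewrite xb_0 expr2; nra.
Qed.

End Lagrangian.

Theorem claim5p4 (R : realType) (n : nat) (G : {set {set 'I_n}}) (x : 'I_n -> R) :
  is_3graph G -> dense R G -> K43e_free G ->
  Num.sqrt 3 / 18 < lagrangian R G ->
  optimum_weight G x ->
  forall a b : 'I_n, a != b -> x a + x b <= (3 - Num.sqrt 3) / 3.
Proof.
move=> G3 _ _ lagr_gt xopt a b ab.
have r0 : 0 <= Num.sqrt 3 :> R := sqrtr_ge0 3.
have r2 : Num.sqrt 3 ^+ 2 = 3 :> R by rewrite sqr_sqrtr.
have [s0|s0] := ltrP 0 (x a + x b).
  by have := optimum_pair_sum_le G3 xopt ab s0; lra.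
rewrite expr2 in r2; nra.
Qed.
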